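(* If $X$ is an (infinite) $T_1$-space such that $nu_s(X)\le 2^{s(X)}$, then $|X|\le 2^{2^{s(X)}}$.
   Context: For a space $X$ and $A\subseteq X$, the $\theta$-closure of $A$ is $\mathrm{cl}_\theta(A):=\{y\in X:\ \overline{B}\cap A\neq\emptyset$ for every open neighborhood $B$ of $y\}$. The non-Urysohn number of $X$ with respect to singletons is $nu_s(X):=1+\sup\{|\mathrm{cl}_\theta(\{x\})|:x\in X\}$. $s(X)$ denotes the spread of $X$ (supremum of cardinalities of discrete subspaces, plus $\omega$). Throughout, ''space'' means infinite topological space. *)

From HB Require Import structures.
From mathcomp Require Import all_boot all_order.
From mathcomp Require Import all_classical all_reals topology.
Set Implicit Arguments. Unset Strict Implicit. Unset Printing Implicit Defensive.
Local Open Scope classical_set_scope.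
Local Open Scope card_scope.

Definition theta_closure (X : topologicalType) (A : set X) : set X :=
  [set y | forall B : set X, open B -> B y -> closure B `&` A !=set0].

Definition discrete_subspace (X : topologicalType) (D : set X) : Prop :=
  forall d, D d -> exists U : set X, open U /\ U `&` D = [set d].

(* |K| = s(X) = sup{|D| : D discrete} + omega, i.e. |K| is the least cardinal
   (w.r.t. injections) bounding all discrete subspaces and omega. *)
Definition is_spread (X : topologicalType) (K : Type) : Prop :=
  [/\ (forall D : set X, discrete_subspace D -> D #<= [set: K]),
      [set: nat] #<= [set: K] &
      (forall L : Type, (forall D : set X, discrete_subspace D -> D #<= [set: L]) ->
         [set: nat] #<= [set: L] -> [set: K] #<= [set: L])].

(* nu_s(X) <= |C|, where nu_s(X) = 1 + sup_x |cl_theta({x})|.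
   1 + |A| is realized as the cardinality of (Some @` A) plus one new point None. *)
Definition nu_s_le (X : topologicalType) (U : Type) (C : set U) : Prop :=
  forall x : X, (Some @` theta_closure [set x] `|` [set None]) #<= C.

From HB Require Import structures.
From mathcomp Require Import all_boot all_order.
From mathcomp Require Import all_classical all_reals topology.
From mathcomp Require Import wochoice.
Local Open Scope classical_set_scope.
Local Open Scope card_scope.

(* First, the pseudocharacter of X is at most 2^s(X): given x, Shapiro's lemma
   yields a discrete D off cl_theta{x} whose closure together with the chosen
   neighbourhoods U d (with x not in cl (U d)) covers X \ cl_theta{x}; the
   complements of the sets cl (U d), of the closures cl E (E a subset of D not
   adherent to x) and of the points of cl_theta{x} \ {x} are then at most
   2^s(X) open neighbourhoods of x with intersection {x}.
   Second, the Hajnal-Juhasz bound |X| <= 2^(s(X) psi(X)) for T1 spaces: colour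
   the pairs z < y of a well-ordering of X by the indices of two neighbourhoods
   separating them. Below each x in the Erdos-Rado canonical tree every colour
   class is discrete, hence of size at most s(X), and x is determined by its
   labelled set of tree predecessors, a relation on a set of size 2^s(X). *)

Lemma card_le_funP {T U} (u0 : U) (A : set T) (B : set U) :
  A #<= B <-> exists2 f : T -> U, set_fun A B f & set_inj A f.
Proof.
split=> [/card_leP[f]|[f fAB finj]]; last first.
  have [g] : $|{injfun A >-> B}| by apply/injfunPex; exists f.
  exact: inj_card_le.
pose g a := if pselect (A a) is left Aa then set_val (f (SigSub (mem_set Aa))) else u0.
exists g => [a Aa|a b /set_mem Aa /set_mem Ab]; rewrite /g.
  by case: pselect => // Aa'; apply: set_valP.
case: pselect => // Aa'; case: pselect => // Ab'.
by move/val_inj/(@inj _ _ _ f) => /(_ (in_setT _) (in_setT _)) /(congr1 val).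
Qed.

Lemma card_le_setTP {T U} : [set: T] #<= [set: U] <-> exists f : T -> U, injective f.
Proof.
split=> [/card_leP[f]|[f finj]]; last first.
  have [g] : $|{injfun [set: T] >-> [set: U]}| by apply/injfunPex; exists f => // a b _ _ /finj.
  exact: inj_card_le.
exists (fun t => set_val (f (SigSub (mem_set (I : [set: T] t))))) => t t'.
by move/val_inj/(@inj _ _ _ f) => /(_ (in_setT _) (in_setT _)) /(congr1 val).
Qed.

Lemma image_set_inj {T U} (f : T -> U) : injective f -> injective (image^~ f).
Proof.
by move=> finj A B AB; apply/funext => a; rewrite -(image_inj (f := f) finj) AB image_inj.
Qed.

Lemma card_le_powerset {T U} : [set: T] #<= [set: U] -> [set: set T] #<= [set: set U].
Proof.
by move=> /card_le_setTP[f /image_set_inj finj]; apply/card_le_setTP; exists (image^~ f).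
Qed.

Lemma card_le_setX {T1 T2 U1 U2} :
  [set: T1] #<= [set: U1] -> [set: T2] #<= [set: U2] -> [set: T1 * T2] #<= [set: U1 * U2].
Proof.
move=> /card_le_setTP[f finj] /card_le_setTP[g ginj]; apply/card_le_setTP.
by exists (fun p => (f p.1, g p.2)) => -[a b] [a' b'] [/finj-> /ginj->].
Qed.

Lemma bit_double_inj (b b' : bool) (n m : nat) :
  (b + n.*2 = b' + m.*2)%N -> b = b' /\ n = m.
Proof.
move=> E; split; first by have := congr1 odd E; rewrite !oddD !odd_double !addbF !oddb.
by have := congr1 half E; rewrite !half_bit_double.
Qed.

(* Hilbert's hotel: shift a copy of nat inside A by n to make room for F. *)
Lemma card_le_setU_finite {T} (A F : set T) :
  infinite_set A -> finite_set F -> A `|` F #<= A.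
Proof.
move=> Ainf /finite_set_leP[n /(card_le_funP 0%N)[h hF hinj]].
have [a0 _] := infinite_setN0 Ainf.
move/infiniteP: Ainf => /(card_le_funP a0)[r rA rinj].
have {}rinj : injective r by move=> m m'; apply: rinj; rewrite in_setT.
pose g x := if pselect (exists m, r m = x) is left rx then r (n + sval (cid rx))%N
  else if pselect (A x) is left _ then x else r (h x).
have g_shift m : g (r m) = r (n + m)%N.
  rewrite /g; case: pselect => [rx|]; last by case; exists m.
  by case: cid => k /= /rinj ->.
have g_id x : A x -> ~ (exists m, r m = x) -> g x = x.
  by move=> Ax nrx; rewrite /g; case: pselect => // _; case: pselect.
have g_out x : ~ A x -> g x = r (h x).
  move=> nAx; rewrite /g; case: pselect => [[m rmx]|_]; first by case: nAx; rewrite -rmx; apply: rA.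
  by case: pselect.
have hn x : F x -> (h x < n)%N by move/hF.
have cases x : (A `|` F) x ->
    [\/ exists m, x = r m, A x /\ ~ (exists m, r m = x) | ~ A x /\ F x].
  move=> AFx; have [[m rmx]|nrx] := pselect (exists m, r m = x); first by apply: Or31; exists m.
  by have [Ax|nAx] := pselect (A x); [apply: Or32 | apply: Or33; case: AFx].
apply: (card_le_funP a0 _ _).2; exists g => [x _|x y /set_mem /cases + /set_mem /cases].
  rewrite /g; case: pselect => [rx|_]; first exact: rA.
  by case: pselect => // _; apply: rA.
move=> [[m ->]|[Ax nrx]|[nAx Fx]];
  [rewrite g_shift|rewrite (g_id x Ax nrx)|rewrite (g_out x nAx)];
  (move=> [[m' ->]|[Ay nry]|[nAy Fy]];
  [rewrite g_shift|rewrite (g_id y Ay nry)|rewrite (g_out y nAy)]) => E.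
- by move/rinj/addnI: E ->.
- by case: nry; exists (n + m)%N.
- by have := hn y Fy; rewrite -(rinj _ _ E) ltnNge leq_addr.
- by case: nrx; exists (n + m')%N.
- by [].
- by case: nrx; exists (h y).
- by have := hn x Fx; rewrite (rinj _ _ E) ltnNge leq_addr.
- by case: nry; exists (h x).
- by apply: hinj (rinj _ _ E); apply/mem_set.
Qed.

Section InfiniteDoubling.
Context {K : Type}.

Definition doubling (G : set ((K * bool) * K)) :=
  [/\ forall p y y', G (p, y) -> G (p, y') -> y = y',
      forall p p' y, G (p, y) -> G (p', y) -> p = p' &
      fst @` G = snd @` G `*` [set: bool]].

Lemma doubling_bigcup (F : set (set ((K * bool) * K))) :
  F `<=` doubling -> total_on F subset -> doubling (\bigcup_(G in F) G).
Proof.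
move=> Fd Ftot; split.
- move=> p y y' [G FG Gy] [G' FG' G'y'].
  have [GG'|G'G] := Ftot _ _ FG FG'.
    by have [Gfun _ _] := Fd _ FG'; apply: Gfun (GG' _ Gy) G'y'.
  by have [Gfun _ _] := Fd _ FG; apply: Gfun Gy (G'G _ G'y').
- move=> p p' y [G FG Gy] [G' FG' G'y].
  have [GG'|G'G] := Ftot _ _ FG FG'.
    by have [_ Ginj _] := Fd _ FG'; apply: Ginj (GG' _ Gy) G'y.
  by have [_ Ginj _] := Fd _ FG; apply: Ginj Gy (G'G _ G'y).
- by rewrite !image_bigcup setX_bigcupl; apply: eq_bigcupr => G /Fd[_ _ ->].
Qed.

(* Glue onto [G] the bijection [(n, b) |-> b + 2 n] on a copy of nat avoiding [snd @` G]. *)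
Lemma doubling_extend G : doubling G -> infinite_set (~` (snd @` G)) ->
  exists2 G', doubling G' & G `<` G'.
Proof.
move=> [Gfun Ginj Gdom] Cinf; have [k0 _] := infinite_setN0 Cinf.
move/infiniteP: Cinf => /(card_le_funP k0)[r rC rinj].
have {}rinj : injective r by move=> m m'; apply: rinj; rewrite in_setT.
have r_fst n b y : ~ G ((r n, b), y).
  move=> Gy; have : (fst @` G) (r n, b) by exists (r n, b, y).
  by rewrite Gdom => -[/(rC n I)].
have r_snd n p : ~ G (p, r n) by move=> Gp; apply: (rC n I); exists (p, r n).
pose H := [set ((r n, b), r (b + n.*2)%N) | n in [set: nat] & b in [set: bool]].
exists (G `|` H); last first.
  split; first exact: subsetUl.
  move=> /(_ ((r 0%N, false), r 0%N)) HG.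
  by apply: (r_fst 0%N false (r 0%N)); apply: HG; right; exists 0%N => //; exists false.
split.
- move=> p y y' [Gy|[n _ [b _ [<- <-]]]] [Gy'|[n' _ [b' _ [E <-]]]].
  + exact: Gfun Gy Gy'.
  + by move: Gy; rewrite -E => /r_fst.
  + by move/r_fst: Gy'.
  + by move/rinj: E => ->.
- move=> p p' y [Gy|[n _ [b _ [<- <-]]]] [Gy'|[n' _ [b' _ [<- E]]]].
  + exact: Ginj Gy Gy'.
  + by move: Gy; rewrite -E => /r_snd.
  + by move/r_snd: Gy'.
  + by move/rinj/bit_double_inj: E => [-> ->].
- apply/seteqP; split=> [_ [[[a b] y] [Gy|[n _ [b' _ [<- <- _]]]] <-]|[a b] [[[p y] Hy /= <-] _]].
  + have : (fst @` G) (a, b) by exists (a, b, y).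
    by rewrite Gdom => -[[q Gq qa] _]; split=> //; exists q => //; left.
  + split=> //=; exists ((r n./2, odd n), r n) => //=; right.
    by exists n./2 => //; exists (odd n) => //; rewrite odd_double_half.
  + case: Hy => [Gy|[n _ [b' _ [_ <-]]]].
      have : (snd @` G `*` [set: bool]) (y, b) by split => //; exists (p, y).
      by rewrite -Gdom => -[q Gq <-]; exists q => //; left.
    exists ((r (b' + n.*2)%N, b), r (b + (b' + n.*2).*2)%N) => //; right.
    by exists (b' + n.*2)%N => //; exists b.
Qed.

Lemma exists_maximal_doubling :
  exists G, doubling G /\ finite_set (~` (snd @` G)).
Proof.
have [G [dG Gmax]] := Zorn_bigcup doubling_bigcup.
exists G; split => //; apply: contrapT => /(doubling_extend _ dG)[G' dG' GG'].
exact: Gmax GG' dG'.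
Qed.

Lemma card_le_prod_bool : [set: nat] #<= [set: K] -> [set: K * bool] #<= [set: K].
Proof.
move=> Kinf; have [G [[_ Ginj Gdom] Cfin]] := exists_maximal_doubling.
have Sinf : infinite_set (snd @` G).
  move=> Sfin; have : finite_set [set: K] by rewrite -(setUv (snd @` G)) finite_setU.
  by move/finite_setPn; apply.
have [k0 _] := infinite_setN0 Sinf.
have /(card_le_funP k0)[h hS hinj] : [set: K] #<= snd @` G.
  by rewrite -[X in X #<= _](setUv (snd @` G)); exact: card_le_setU_finite.
have /choice[d dG] : forall p : K * bool, exists y, (snd @` G) p.1 -> G (p, y).
  move=> [k b]; have [Sk|nSk] := pselect ((snd @` G) k); last by exists k0.
  have : (fst @` G) (k, b) by rewrite Gdom.
  by case=> -[q y] Gqy /= qkb; exists y => _; rewrite -qkb.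
apply/card_le_setTP; exists (fun p => d (h p.1, p.2)) => -[k b] [k' b'] /= E.
have := dG (h k, b) (hS k I); rewrite E => /(Ginj _ _ _) /(_ (dG (h k', b') (hS k' I))).
by case=> /(hinj _ _ (in_setT _) (in_setT _)) -> ->.
Qed.

End InfiniteDoubling.

Section PowersetArithmetic.
Context {K : Type} (K_infinite : [set: nat] #<= [set: K]).

Lemma card_le_powerset_setX : [set: set K * set K] #<= [set: set K].
Proof.
apply: (card_le_trans _ (card_le_powerset (card_le_prod_bool K_infinite))).
apply/card_le_setTP.
exists (fun ST => [set p : K * bool | if p.2 then ST.2 p.1 else ST.1 p.1]).
move=> [S T] [S' T'] E; congr pair; apply/funext => k.
- exact: (congr1 (fun A => A (k, false)) E).
- exact: (congr1 (fun A => A (k, true)) E).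
Qed.

Lemma card_le_setX_powerset {T U} :
  [set: T] #<= [set: set K] -> [set: U] #<= [set: set K] -> [set: T * U] #<= [set: set K].
Proof. by move=> TK UK; apply: (card_le_trans _ card_le_powerset_setX); apply: card_le_setX. Qed.

Lemma card_le_set1 : [set: K] #<= [set: set K].
Proof. by apply/card_le_setTP; exists set1 => a b /seteqP[/(_ a erefl)]. Qed.

Lemma card_le_setU_powerset {T} (A B : set T) :
  A #<= [set: set K] -> B #<= [set: set K] -> A `|` B #<= [set: set K].
Proof.
move=> /pcard_injP[f finj] /pcard_injP[g ginj].
have [k _] := infinite_setN0 (proj2 (infiniteP _) K_infinite).
have TN0 : [set: K] <> set0 by move/seteqP => -[/(_ k I)].
apply: (card_le_trans _ card_le_powerset_setX); apply/pcard_injP.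
exists (fun x => if pselect (A x) then (f x, setT) else (g x, set0)).
move=> x y /set_mem ABx /set_mem ABy.
case: pselect => Ax; case: pselect => Ay [].
- exact: finj (mem_set Ax) (mem_set Ay).
- by move=> _ /TN0.
- by move=> _ /esym/TN0.
- by apply: ginj; apply/mem_set; [case: ABx | case: ABy].
Qed.

End PowersetArithmetic.

Lemma setI_eq_set1 {T} {V D : set T} {d : T} :
  V `&` D = [set d] -> V d /\ D d /\ forall z, V z -> D z -> z = d.
Proof.
move=> VD; have [Vd Dd] : (V `&` D) d by rewrite VD.
by split; [|split] => // z Vz Dz; have : (V `&` D) z by []; rewrite VD.
Qed.

Lemma closure_setI_open {X : topologicalType} (D B : set X) (y : X) :
  open B -> B y -> closure D y -> closure (D `&` B) y.
Proof.
move=> oB By cDy N Ny.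
have [z [Dz [Nz Bz]]] := cDy _ (filterI Ny (open_nbhs_nbhs (conj oB By))).
by exists z.
Qed.

Section DiscreteKernel.
Context {X : topologicalType} {Y : set X} (U : X -> set X).
Hypothesis U_nbhs : forall y, Y y -> open (U y) /\ U y y.

Definition separated_extension (D D' : set X) :=
  D `<=` D' /\ forall y, D' y -> ~ D y -> ~ closure D y /\ forall d, D d -> ~ U d y.

Lemma separated_extension_trans D1 D2 D3 :
  separated_extension D1 D2 -> separated_extension D2 D3 -> separated_extension D1 D3.
Proof.
move=> [D12 sep12] [D23 sep23]; split=> [z /D12/D23 //|y D3y nD1y].
have [D2y|nD2y] := pselect (D2 y); first exact: sep12.
have [ncl nU] := sep23 y D3y nD2y; split=> [cl1|d /D12]; last exact: nU.
by apply: ncl; apply: closureS cl1.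
Qed.

Lemma separated_extension_bigcup (A : set (set X)) D :
  total_on A separated_extension -> A D -> separated_extension D (\bigcup_(E in A) E).
Proof.
move=> Atot AD; split=> [z Dz|y [E AE Ey] nDy]; first by exists D.
have [[_ DE]|[ED _]] := Atot _ _ AD AE; first exact: DE.
by case: nDy; apply: ED.
Qed.

Lemma discrete_bigcup (A : set (set X)) :
  total_on A separated_extension -> (forall D, A D -> D `<=` Y /\ discrete_subspace D) ->
  discrete_subspace (\bigcup_(D in A) D).
Proof.
move=> Atot AP d [D AD Dd]; have [DY Ddisc] := AP D AD.
have [V [oV VD]] := Ddisc d Dd.
have [Vd [_ VDd]] := setI_eq_set1 VD.
have [oU Udd] := U_nbhs _ (DY d Dd).
exists (V `&` U d); split; first exact: openI.
apply/seteqP; split=> [z [[Vz Udz] [E AE Ez]]|_ ->]; last by split; [|exists D].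
have [[DE sepDE]|[ED _]] := Atot _ _ AD AE; last exact: VDd (ED _ Ez).
have [Dz|nDz] := pselect (D z); first exact: VDd.
by have [_ /(_ d Dd)] := sepDE z Ez nDz.
Qed.

Lemma discrete_setU1 {D y} : discrete_subspace D -> D `<=` Y ->
  ~ closure D y -> (forall d, D d -> ~ U d y) -> discrete_subspace (D `|` [set y]).
Proof.
move=> Ddisc DY ncl nU z [Dz|->].
- have [V [oV VD]] := Ddisc z Dz; have [Vz [_ VDz]] := setI_eq_set1 VD.
  have [oU Uzz] := U_nbhs _ (DY z Dz).
  exists (V `&` U z); split; first exact: openI.
  apply/seteqP; split=> [w [[Vw Uzw] [Dw|wy]]|_ ->]; last by split; [|left].
    exact: VDz.
  by case: (nU z Dz); rewrite -wy.
- exists (~` closure D); split; first by rewrite openC; exact: closed_closure.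
  apply/seteqP; split=> [w [ncw [Dw|->]] //|_ ->]; last by split => //; right.
  by case: ncw; apply: subset_closure.
Qed.

Lemma discrete_kernel : exists D, [/\ D `<=` Y, discrete_subspace D &
  Y `<=` closure D `|` \bigcup_(d in D) U d].
Proof.
pose T := {D : set X | D `<=` Y /\ discrete_subspace D}.
pose R (s t : T) := `[< separated_extension (sval s) (sval t) >].
have [[D [DY Ddisc]] Dmax] : exists t, forall s, R t s -> s = t.
  apply: Zorn => [s|r s t /asboolP rs /asboolP st|[s ?] [t ?] /asboolP[st _] /asboolP[ts _]|A Atot].
  - by apply/asboolP; split => // y.
  - by apply/asboolP; apply: separated_extension_trans rs st.
  - by apply: eq_exist; apply/seteqP; split.
  - pose W := \bigcup_(s in A) sval s.
    have Wtot : total_on (sval @` A) separated_extension.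
      by move=> _ _ [s As <-] [t At <-]; case: (Atot _ _ As At) => /asboolP; [left|right].
    have WE : W = \bigcup_(E in sval @` A) E by rewrite bigcup_image.
    have WY : W `<=` Y by move=> z [s _ sz]; case: (svalP s) => /(_ z sz).
    have Wdisc : discrete_subspace W.
      rewrite WE; apply: discrete_bigcup => // _ [s _ <-]; exact: (svalP s).
    exists (exist _ W (conj WY Wdisc)) => s As; apply/asboolP => /=.
    by rewrite WE; apply: separated_extension_bigcup => //; exists s.
exists D; split => // y Yy; apply: contrapT => /not_orP[ncl nU].
have {}nU d : D d -> ~ U d y by move=> Dd Udy; apply: nU; exists d.
have D'Y : D `|` [set y] `<=` Y by move=> z [/DY|->].
have D'disc := discrete_setU1 Ddisc DY ncl nU.
have ext : R (exist _ D (conj DY Ddisc)) (exist _ _ (conj D'Y D'disc)).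
  by apply/asboolP; split=> [z Dz|w [//|->] _]; [left|split].
have /(congr1 sval) /= DD' := Dmax _ ext.
have : (D `|` [set y]) y by right.
by rewrite DD' => /nU; apply; have [] := U_nbhs _ Yy.
Qed.

End DiscreteKernel.

Lemma card_le_subsets {T U} (u0 : U) {A : set T} :
  A #<= [set: U] -> [set E | E `<=` A] #<= [set: set U].
Proof.
move=> /(card_le_funP u0)[f _ finj]; apply/pcard_injP; exists (image^~ f).
have sub E E' : E `<=` A -> E' `<=` A -> f @` E = f @` E' -> E `<=` E'.
  move=> EA E'A fEE' z Ez; have : (f @` E') (f z) by rewrite -fEE'; exists z.
  by case=> z' E'z' /(finj _ _ (mem_set (E'A _ E'z')) (mem_set (EA _ Ez))) <-.
move=> E E' /set_mem EA /set_mem E'A fEE'.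
by apply/seteqP; split; [apply: sub fEE' | apply: sub (esym fEE')].
Qed.

Section Pseudocharacter.
Context {X : topologicalType} {K : Type}.
Hypotheses (X_T1 : accessible_space X) (K_infinite : [set: nat] #<= [set: K]).
Hypothesis spread_le : forall D : set X, discrete_subspace D -> D #<= [set: K].
Hypothesis theta_le : forall x : X, theta_closure [set x] #<= [set: set K].

Section PseudobaseFamily.
Variables (x : X) (U : X -> set X) (D : set X).
Let th := theta_closure [set x].
Hypothesis U_sep : forall y, ~ th y -> [/\ open (U y), U y y & ~ closure (U y) x].
Hypotheses (D_sub : D `<=` ~` th) (D_discrete : discrete_subspace D).
Hypothesis D_cover : ~` th `<=` closure D `|` \bigcup_(d in D) U d.

Definition pseudobase_family : set (set X) :=
  [set ~` closure (U d) | d in D] `|`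
  [set ~` closure E | E in [set E | E `<=` D /\ ~ closure E x]] `|`
  [set ~` [set w] | w in th `\ x].

Lemma pseudobase_family_open F : pseudobase_family F -> open F /\ F x.
Proof.
case=> [[[d Dd <-]|[E [_ nEx] <-]]|[w [_ wx] <-]].
- split; first by rewrite openC; exact: closed_closure.
  by have [_ _] := U_sep _ (D_sub _ Dd).
- by split=> //; rewrite openC; exact: closed_closure.
- split; first by rewrite openC; exact: accessible_closed_set1.
  by move=> xw; apply: wx.
Qed.

Lemma pseudobase_family_sep y : y <> x -> exists2 F, pseudobase_family F & ~ F y.
Proof.
move=> yx; have [thy|nthy] := pselect (th y).
  by exists (~` [set y]); [right; exists y|apply].
have [oU Uy nUx] := U_sep _ nthy.
case: (D_cover _ nthy) => [cDy|[d Dd Udy]].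
  exists (~` closure (D `&` U y)); last by apply; apply: closure_setI_open.
  left; right; exists (D `&` U y) => //; split=> [z []//|].
  by apply: contra_not nUx; apply: closureS => z [].
exists (~` closure (U d)); last by apply; apply: subset_closure.
by left; left; exists d.
Qed.

Lemma pseudobase_family_card : pseudobase_family #<= [set: set K].
Proof.
have [k _] := infinite_setN0 (proj2 (infiniteP _) K_infinite).
have DK := spread_le _ D_discrete.
apply: card_le_setU_powerset => //; first apply: card_le_setU_powerset => //.
all: apply: (card_le_trans (card_image_le _ _)).
- exact: (card_le_trans DK card_le_set1).
- have sub : [set E | E `<=` D /\ ~ closure E x] `<=` [set E | E `<=` D] by move=> E [].
  exact: (card_le_trans (subset_card_le sub) (card_le_subsets k DK)).
- exact: (card_le_trans (subset_card_le (@subDsetl _ _ _)) (theta_le x)).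
Qed.

End PseudobaseFamily.

Lemma pseudocharacter_le x : exists V : set K -> set X,
  (forall i, open (V i) /\ V i x) /\ (forall y, y <> x -> exists i, ~ V i y).
Proof.
pose th := theta_closure [set x].
have /choice[U U_sep] : forall y, exists B, ~ th y -> [/\ open B, B y & ~ closure B x].
  move=> y; have [thy|/existsNP[B /not_implyP[oB /not_implyP[By nBx]]]] := pselect (th y).
    by exists setT.
  by exists B => _; split => // cBx; apply: nBx; exists x.
have U_nbhs y : (~` th) y -> open (U y) /\ U y y by case/U_sep.
have [D [Dsub Ddisc Dcov]] := discrete_kernel _ U_nbhs.
have /pfcard_geP[F0|/surjfunPex[V FV]] := pseudobase_family_card x U D Ddisc.
  have : pseudobase_family x U D setT.
    rewrite /pseudobase_family.
    by left; right; exists set0; [split=> //; rewrite closure0|rewrite closure0 setC0].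
  by rewrite F0.
exists V; split=> [i|y /(pseudobase_family_sep _ _ _ U_sep Dcov)[F]].
  by apply: (pseudobase_family_open _ _ _ U_sep Dsub); rewrite FV; exists i.
by rewrite FV => -[i _ <-]; exists i.
Qed.

End Pseudocharacter.

Section WellOrder.
Context {T : eqType} {R : rel T} (R_wo : well_order R).

Lemma well_order_min (P : T -> Prop) :
  (exists x, P x) -> exists m, P m /\ forall y, P y -> R m y.
Proof.
move=> [x Px]; have [m [[Pm mlb] _]] := R_wo [pred z | `[< P z >]] (ex_intro _ x (asboolT Px)).
by exists m; split=> [|y Py]; [move: Pm => /asboolP | apply: mlb; apply/asboolP].
Qed.

Let R_chain : wo_chain R predT := fun A _ => R_wo A.

Lemma wo_refl x : R x x.
Proof. exact: wo_chain_reflexive R_chain x isT. Qed.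

Lemma wo_anti {x y} : R x y -> R y x -> x = y.
Proof. by move=> xy yx; apply: (wo_chain_antisymmetric R_chain isT isT); rewrite xy. Qed.

Lemma wo_total x y : R x y || R y x.
Proof. exact: wo_chainW R_chain x y isT isT. Qed.

Lemma wo_trans {x y z} : R x y -> R y z -> R x z.
Proof.
move=> xy yz; have [m [[->|->|->] mmin]] :=
  @well_order_min (fun w => [\/ w = x, w = y | w = z]) (ex_intro _ x (Or31 _ _ erefl)).
- by apply: mmin; apply: Or33.
- by rewrite (wo_anti xy (mmin x (Or31 _ _ erefl))).
- by rewrite -(wo_anti yz (mmin y (Or32 _ _ erefl))).
Qed.

Definition wo_lt x y := R x y /\ x <> y.

Lemma wo_lt_trans {x y z} : wo_lt x y -> wo_lt y z -> wo_lt x z.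
Proof.
move=> [xy nxy] [yz nyz]; split=> [|xz]; first exact: wo_trans xy yz.
by subst z; apply: nxy; apply: wo_anti.
Qed.

Lemma wo_lt_irr x : ~ wo_lt x x.
Proof. by case. Qed.

Lemma wo_ltgtP x y : [\/ wo_lt x y, x = y | wo_lt y x].
Proof.
have [->|nxy] := pselect (x = y); first exact: Or32.
by case/orP: (wo_total x y) => H; [apply: Or31 | apply: Or33]; split=> // /esym.
Qed.

Lemma wo_lt_ind (P : T -> Prop) :
  (forall x, (forall y, wo_lt y x -> P y) -> P x) -> forall x, P x.
Proof.
move=> IH x; apply: contrapT => nPx.
have [m [nPm mmin]] := @well_order_min (fun z => ~ P z) (ex_intro _ x nPx).
apply: nPm; apply: IH => y [ym nym]; apply: contrapT => nPy.
by apply: nym; apply: wo_anti ym (mmin _ nPy).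
Qed.

Lemma wo_lt_wf : well_founded wo_lt.
Proof. by apply: wo_lt_ind => x IH; constructor. Qed.

Section CanonicalTree.
Context {Col : Type} (col : T -> T -> Col).

(* [canon_pred x y]: [y] lies below [x] in the Erdos-Rado canonical tree of the
   colouring [col], i.e. [y < x] and every tree predecessor [z] of [y] sees [y]
   and [x] with the same colour. *)
Definition canon_pred_step x y (rec : forall z, wo_lt z y -> Prop) : Prop :=
  wo_lt y x /\ forall z (zy : wo_lt z y), rec z zy -> col z y = col z x.

Definition canon_pred x : T -> Prop := Fix wo_lt_wf (fun _ => Prop) (canon_pred_step x).

Lemma canon_predE x y : canon_pred x y <->
  wo_lt y x /\ forall z, wo_lt z y -> canon_pred x z -> col z y = col z x.
Proof.
rewrite /canon_pred Fix_eq // => w f g fg; rewrite /canon_pred_step.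
by have -> : f = g by apply: functional_extensionality_dep => v; apply: funext => vw; apply: fg.
Qed.

Lemma canon_pred_lt {x y} : canon_pred x y -> wo_lt y x.
Proof. by case/canon_predE. Qed.

Lemma canon_pred_col {x y z} : canon_pred x y -> wo_lt z y -> canon_pred x z -> col z y = col z x.
Proof. by case/canon_predE => _; apply. Qed.

Lemma canon_pred_sub {x y} : canon_pred x y ->
  forall z, wo_lt z y -> canon_pred y z <-> canon_pred x z.
Proof.
move=> Cxy; apply: (@wo_lt_ind (fun z => wo_lt z y -> (canon_pred y z <-> canon_pred x z))).
move=> z IH zy; have yx := canon_pred_lt Cxy; rewrite !canon_predE; split.
  move=> [_ Cz]; split=> [|w wz Cxw]; first exact: wo_lt_trans zy yx.
  have wy := wo_lt_trans wz zy.
  by rewrite (Cz w wz) ?(IH w wz wy) //; apply: canon_pred_col Cxy wy Cxw.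
move=> [_ Cz]; split=> // w wz Cyw; have wy := wo_lt_trans wz zy.
have Cxw : canon_pred x w by rewrite -(IH w wz wy).
by rewrite (Cz w wz Cxw) (canon_pred_col Cxy wy Cxw).
Qed.

Lemma canon_pred_eq x y : (forall z, canon_pred x z <-> canon_pred y z) ->
  (forall z, canon_pred x z -> col z x = col z y) -> x = y.
Proof.
move=> CC colE; case: (wo_ltgtP x y) => // [xy|yx].
  have Cyx : canon_pred y x by apply/canon_predE; split=> // z zx /CC/colE.
  by have /wo_lt_irr := canon_pred_lt (proj2 (CC x) Cyx).
have Cxy : canon_pred x y by apply/canon_predE; split=> // z zy Cxz; rewrite colE.
by have /wo_lt_irr := canon_pred_lt (proj1 (CC y) Cxy).
Qed.

Lemma canon_pred_iso x y (phi : T -> T) :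
  (forall a, canon_pred x a -> canon_pred y (phi a)) ->
  (forall b, canon_pred y b -> exists2 a, canon_pred x a & phi a = b) ->
  (forall a a', canon_pred x a -> canon_pred x a' -> R a a' = R (phi a) (phi a')) ->
  (forall a, canon_pred x a -> col a x = col (phi a) y) -> x = y.
Proof.
move=> phiC phiS phiR phi_col.
have phi_lt a a' : canon_pred x a -> canon_pred x a' -> wo_lt a a' <-> wo_lt (phi a) (phi a').
  move=> Ca Ca'; rewrite /wo_lt (phiR _ _ Ca Ca'); apply: and_iff_compat_l.
  split=> [nea E|npa E]; last by apply: npa; rewrite E.
  by apply: nea; apply: wo_anti; rewrite phiR // E wo_refl.
have phi_id w : canon_pred x w -> phi w = w.
  elim/wo_lt_ind: w => w IH Cxw; have Cyw := phiC w Cxw.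
  have below z : canon_pred w z ->
      [/\ canon_pred x z, phi z = z, wo_lt z w & wo_lt z (phi w)].
    move=> Cwz; have zw := canon_pred_lt Cwz.
    have Cxz : canon_pred x z by rewrite -(canon_pred_sub Cxw _ zw).
    have pz := IH z zw Cxz; split=> //.
    by rewrite -{1}pz; apply/(phi_lt _ _ Cxz Cxw).
  symmetry; apply: canon_pred_eq => [z|z /below[Cxz pz zw zpw]].
    split=> [/below[Cxz pz _ zpw]|Cpwz].
      by rewrite (canon_pred_sub Cyw _ zpw) -pz; apply: phiC.
    have [a Cxa az] := phiS _ (proj1 (canon_pred_sub Cyw _ (canon_pred_lt Cpwz)) Cpwz).
    move: Cpwz; rewrite -az => /canon_pred_lt zpw.
    have aw : wo_lt a w by apply/(phi_lt _ _ Cxa Cxw).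
    by rewrite (IH a aw Cxa) (canon_pred_sub Cxw _ aw).
  have Cyz : canon_pred y z by rewrite -pz; apply: phiC.
  by rewrite (canon_pred_col Cxw zw Cxz) (canon_pred_col Cyw zpw Cyz) phi_col // pz.
apply: canon_pred_eq => [z|z Cxz]; last by rewrite phi_col // phi_id.
split=> [Cxz|/phiS[a Cxa <-]]; last by rewrite phi_id.
by rewrite -(phi_id z Cxz); apply: phiC.
Qed.

Context {L : Type} (label : T -> T -> L) (lcol : L -> Col).
Hypothesis label_inj : forall {x a b},
  canon_pred x a -> canon_pred x b -> label x a = label x b -> a = b.
Hypothesis label_col : forall {x a}, canon_pred x a -> lcol (label x a) = col a x.

Definition canon_code x : set (L * L) := [set p | exists a b,
  [/\ canon_pred x a, canon_pred x b, R a b & p = (label x a, label x b)]].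

Lemma canon_code_transfer {x y a a'} : canon_code x = canon_code y ->
  canon_pred x a -> canon_pred x a' -> R a a' ->
  exists b b', [/\ canon_pred y b, canon_pred y b', R b b',
                   label y b = label x a & label y b' = label x a'].
Proof.
move=> E Ca Ca' Raa'; have : canon_code x (label x a, label x a') by exists a, a'.
by rewrite E => -[b [b' [Cb Cb' Rbb' [-> ->]]]]; exists b, b'.
Qed.

(* The isomorphism type of the labelled tree below [x] determines [x]. *)
Lemma canon_code_inj : injective canon_code.
Proof.
move=> x y E.
have /choice[phi phiP] :
    forall a, exists b, canon_pred x a -> canon_pred y b /\ label y b = label x a.
  move=> a; have [Ca|] := pselect (canon_pred x a); last by exists a.
  by have [b [_ [Cb _ _ lb _]]] := canon_code_transfer E Ca Ca (wo_refl a); exists b.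
apply: (canon_pred_iso x y phi) => [a /phiP[]//|b Cb|a a' Ca Ca'|a Ca].
- have [a [_ [Ca _ _ la _]]] := canon_code_transfer (esym E) Cb Cb (wo_refl b).
  exists a => //; have [Cpa lpa] := phiP a Ca.
  by apply: (label_inj Cpa Cb); rewrite lpa.
- have [Cpa lpa] := phiP a Ca; have [Cpa' lpa'] := phiP a' Ca'.
  apply/idP/idP => Rel.
    have [b [b' [Cb Cb' Rbb' lb lb']]] := canon_code_transfer E Ca Ca' Rel.
    have -> : phi a = b by apply: label_inj Cpa Cb _; rewrite lpa lb.
    by have -> : phi a' = b' by apply: label_inj Cpa' Cb' _; rewrite lpa' lb'.
  have [b [b' [Cb Cb' Rbb' lb lb']]] := canon_code_transfer (esym E) Cpa Cpa' Rel.
  have <- : b = a by apply: label_inj Cb Ca _; rewrite lb lpa.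
  by have <- : b' = a' by apply: label_inj Cb' Ca' _; rewrite lb' lpa'.
- have [Cpa lpa] := phiP a Ca.
  by rewrite -label_col // -(label_col Cpa) lpa.
Qed.

End CanonicalTree.
End WellOrder.

Definition tree_label (K : Type) := ((set K * set K) * set K)%type.

Section SeparatingTree.
Context {X : topologicalType} {K : Type} {R : rel X} (R_wo : well_order R).
Hypothesis spread_le : forall D : set X, discrete_subspace D -> D #<= [set: K].
Variable V : X -> set K -> set X.
Hypothesis V_nbhs : forall x i, open (V x i) /\ V x i x.
Hypothesis V_sep : forall x y, y <> x -> exists i, ~ V x i y.

Definition sep_index (x y : X) : set K :=
  if pselect (exists i, ~ V x i y) is left yV then sval (cid yV) else set0.

Lemma sep_indexP {x y} : y <> x -> ~ V x (sep_index x y) y.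
Proof.
move=> yx; rewrite /sep_index; case: pselect => [yV|]; first by case: cid.
by case; apply: V_sep.
Qed.

Definition sep_colour (z y : X) : set K * set K := (sep_index z y, sep_index y z).

Local Notation C := (canon_pred R_wo sep_colour).

(* Points of one colour class below [x] are pairwise coloured alike, so each is
   isolated from the others by the two neighbourhoods named by that colour. *)
Lemma canon_class_discrete x c : discrete_subspace [set a | C x a /\ sep_colour a x = c].
Proof.
move=> h [Ch hc]; have [oV1 Vh1] := V_nbhs h c.1; have [oV2 Vh2] := V_nbhs h c.2.
exists (V h c.1 `&` V h c.2); split; first exact: openI.
apply/seteqP; split=> [z [[V1 V2] [Cz zc]]|_ ->] //=.
case: (wo_ltgtP R_wo h z) => // hz.
- have zh : z <> h by move=> E; subst z; case: hz.
  have := canon_pred_col R_wo sep_colour Cz hz Ch; rewrite hc => E.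
  by have := sep_indexP zh; rewrite -[sep_index h z]/(sep_colour h z).1 E.
- have zh : z <> h by move=> E; subst z; case: hz.
  have := canon_pred_col R_wo sep_colour Ch hz Cz; rewrite zc => E.
  by have := sep_indexP zh; rewrite -[sep_index h z]/(sep_colour z h).2 E.
Qed.

Lemma exists_tree_label : exists label : X -> X -> tree_label K,
  (forall x a b, C x a -> C x b -> label x a = label x b -> a = b) /\
  (forall x a, C x a -> (label x a).1 = sep_colour a x).
Proof.
have /choice[e eP] : forall xc : X * (set K * set K), exists e : X -> set K,
    {in [set a | C xc.1 a /\ sep_colour a xc.1 = xc.2] &, injective e}.
  move=> [x c]; apply/pcard_injP.
  exact: (card_le_trans (spread_le _ (canon_class_discrete x c)) card_le_set1).
exists (fun x a => (sep_colour a x, e (x, sep_colour a x) a)); split=> // x a b Ca Cb E.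
have /= ab := congr1 fst E; move: (congr1 snd E) => /=; rewrite -ab.
by apply: (eP (x, sep_colour a x)); apply/mem_set.
Qed.

Lemma card_le_tree_code : [set: X] #<= [set: set (tree_label K * tree_label K)].
Proof.
have [label [label_inj label_col]] := exists_tree_label.
apply/card_le_setTP; exists (canon_code R_wo sep_colour label).
exact: canon_code_inj label_inj label_col.
Qed.

End SeparatingTree.

Theorem corollary3p13 (X : topologicalType) (K : Type) :
  infinite_set [set: X] ->
  accessible_space X ->
  is_spread X K ->
  nu_s_le X [set: set K] ->
  [set: X] #<= [set: set (set K)].
Proof.
move=> _ X_T1 [spread_le K_infinite _] nu.
have theta_le (x : X) : theta_closure [set x] #<= [set: set K].
  rewrite -(card_le_eql card_some).
  by apply: (card_le_trans _ (nu x)); apply: subset_card_le; apply: subsetUl.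
have /choice[V V_pseudobase] := pseudocharacter_le X_T1 K_infinite spread_le theta_le.
have [R R_wo] := well_ordering_principle X.
have label_le : [set: tree_label K] #<= [set: set K].
  exact: (card_le_setX_powerset K_infinite (card_le_powerset_setX K_infinite) (card_lexx _)).
apply: (card_le_trans (card_le_tree_code R_wo spread_le V (fun x => (V_pseudobase x).1)
  (fun x => (V_pseudobase x).2))).
exact: card_le_powerset (card_le_setX_powerset K_infinite label_le label_le).
Qed.
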